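(* Let $U$ be a finite nonempty set and $R$ an equivalence relation on $U$. Let $\mathbf{S}(R)=\{X\subseteq U \mid R^{*}(X)=U\}$ and let $\mathbf{I}(R)=\{X\subseteq U \mid X\subseteq S \text{ for some inclusion-minimal member } S \text{ of } \mathbf{S}(R)\}$ be the family of independent sets of the support matroid $M(R)=(U,\mathbf{I}(R))$. Then $$\mathbf{I}(R)=\{X\subseteq U \mid \forall x\in U,\ |RN(x)\cap X|\leq 1\}.$$
   Context: For $x\in U$, $RN(x)=\{y\in U\mid xRy\}$ is the equivalence class of $x$. The upper approximation of $X\subseteq U$ is $R^{*}(X)=\{x\in U\mid RN(x)\cap X\neq\emptyset\}$. The support matroid $M(R)$ induced by $R$ is the matroid on $U$ whose independent sets are the subsets of inclusion-minimal members of $\mathbf{S}(R)$; its support sets (subsets of $U$ containing a base, i.e. a maximal independent set) are exactly the members of $\mathbf{S}(R)$. *)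

From mathcomp Require Import all_boot.
Set Implicit Arguments. Unset Strict Implicit. Unset Printing Implicit Defensive.

Definition RN (U : finType) (R : rel U) (x : U) : {set U} := [set y | R x y].

Definition upper (U : finType) (R : rel U) (X : {set U}) : {set U} :=
  [set x | RN R x :&: X != set0].

Definition suppS (U : finType) (R : rel U) : {set {set U}} :=
  [set X : {set U} | upper R X == [set: U]].

Definition indepI (U : finType) (R : rel U) : {set {set U}} :=
  [set X : {set U} | [exists S : {set U}, minset (fun Y => Y \in suppS R) S && (X \subset S)]].

From mathcomp Require Import all_boot.

Set Implicit Arguments.
Unset Strict Implicit.
Unset Printing Implicit Defensive.

(* The supports of R are the sets meeting every equivalence class, so the
   minimal supports are exactly the sets meeting every class in one point.
   A set X meeting each class at most once is therefore independent: a
   support minimal among those containing X cannot contain two related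
   points, since one of them lies outside X and could be removed. *)

Section SupportMatroid.
Variables (U : finType) (R : rel U).

Lemma suppSP (S : {set U}) :
  reflect (forall x, exists2 y, y \in S & R x y) (S \in suppS R).
Proof.
rewrite inE /upper; apply: (iffP eqP) => [S_supp x | meetS].
  have : x \in [set x | RN R x :&: S != set0] by rewrite S_supp inE.
  by rewrite inE => /set0Pn [y]; rewrite !inE => /andP[Rxy yS]; exists y.
apply/setP => x; rewrite !inE; have [y yS Rxy] := meetS x.
by apply/set0Pn; exists y; rewrite !inE Rxy yS.
Qed.

Definition supports_containing (X : {set U}) : pred {set U} :=
  fun Y => (Y \in suppS R) && (X \subset Y).

Definition rel_free (A : {set U}) := {in A &, forall y z, R y z -> y = z}.

Hypothesis eqR : equivalence_rel R.

Let Rxx x : R x x. Proof. exact: (eqR x x x).1. Qed.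
Let R_sym x y : R x y -> R y x.
Proof. by move=> Rxy; rewrite -((eqR x y x).2 Rxy). Qed.
Let R_trans x y z : R x y -> R y z -> R x z.
Proof. by move=> Rxy; rewrite ((eqR x y z).2 Rxy). Qed.

Lemma suppS_setT : [set: U] \in suppS R.
Proof. by apply/suppSP => x; exists x; rewrite ?inE. Qed.

Lemma suppS_setD1 (S : {set U}) t z :
  S \in suppS R -> z \in S -> z != t -> R t z -> S :\ t \in suppS R.
Proof.
move=> /suppSP meetS zS neq_zt Rtz; apply/suppSP => x.
have [y yS Rxy] := meetS x; have [eq_yt | neq_yt] := eqVneq y t.
  by subst y; exists z; [rewrite !inE neq_zt | apply: R_trans Rxy Rtz].
by exists y; rewrite // !inE neq_yt.
Qed.

Lemma minset_suppSP (S : {set U}) :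
  minset (fun Y => Y \in suppS R) S <-> S \in suppS R /\ rel_free S.
Proof.
split=> [/minsetP[S_supp minS] | [S_supp freeS]].
  split=> // y z yS zS Ryz; apply/eqP/negPn/negP => neq_yz.
  have := minS _ (suppS_setD1 S_supp zS _ Ryz) (subsetDl _ _).
  by rewrite eq_sym neq_yz => /(_ isT) /setP /(_ y); rewrite !inE eqxx yS.
apply/minsetP; split=> // T /suppSP meetT sTS; apply/eqP.
rewrite eqEsubset sTS; apply/subsetP => y yS; have [t tT Ryt] := meetT y.
by rewrite (freeS y t yS (subsetP sTS t tT) Ryt).
Qed.

Lemma rel_free_card (X : {set U}) :
  rel_free X <-> forall x, #|RN R x :&: X| <= 1.
Proof.
split=> [freeX x | cardX y z yX zX Ryz].
  apply/card_le1_eqP => y z; rewrite !inE => /andP[Rxy yX] /andP[Rxz zX].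
  by apply/esym/freeX => //; apply: R_trans (R_sym Rxy) Rxz.
by apply/esym/(card_le1_eqP (cardX y)); rewrite !inE ?Rxx ?Ryz ?yX ?zX.
Qed.

Lemma rel_free_minset_supports_containing (X S : {set U}) :
  rel_free X -> minset (supports_containing X) S -> rel_free S.
Proof.
move=> freeX /minsetP[/andP[S_supp sXS] minS] y z yS zS Ryz.
apply/eqP/negPn/negP => neq_yz.
wlog yNX : y z yS zS Ryz neq_yz / y \notin X.
  move=> yNX_free; case yX: (y \in X); last by apply: (yNX_free y z); rewrite ?yX.
  apply: (yNX_free z y) => //; [exact: R_sym | by rewrite eq_sym |].
  by apply: contraNN neq_yz => zX; rewrite (freeX y z yX zX Ryz).
have sXSy : X \subset S :\ y.
  by apply/subsetP => w wX; rewrite !inE (subsetP sXS w wX) andbT;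
     apply: contraNneq yNX => <-.
have suppSy : S :\ y \in suppS R.
  by apply: suppS_setD1 S_supp zS _ Ryz; rewrite eq_sym.
have := minS (S :\ y); rewrite /supports_containing suppSy sXSy.
by move=> /(_ isT (subsetDl _ _)) /setP /(_ y); rewrite !inE eqxx yS.
Qed.

End SupportMatroid.

Theorem theorem1 (U : finType) (R : rel U) :
  0 < #|U| -> equivalence_rel R ->
  indepI R = [set X : {set U} | [forall x : U, #|RN R x :&: X| <= 1]].
Proof.
move=> _ eqR; apply/setP => X; rewrite !inE; apply/existsP/forallP.
  move=> [S /andP[/(minset_suppSP eqR) [_ freeS] sXS]].
  apply/(rel_free_card eqR) => y z /(subsetP sXS) yS /(subsetP sXS) zS.
  exact: freeS.
move=> /(rel_free_card eqR) freeX.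
have suppT : supports_containing R X [set: U].
  by rewrite /supports_containing subsetT andbT suppS_setT.
have [S minS _] := minset_exists suppT; exists S.
have /minsetP[/andP[S_supp sXS] _] := minS.
rewrite sXS andbT; apply/(minset_suppSP eqR); split=> //.
exact: rel_free_minset_supports_containing minS.
Qed.
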